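(* Let $0\le b<1$ and $0<c<1$. Let $(X,L_1,\dots,L_n)$ be jointly distributed with $X$ finitely supported and $L_i\in\{0,1\}$, and let $\pi$ be a collaborating cryptogenography protocol with full transcript $T$. Suppose that for all $i\in\{1,\dots,n\}$ and all $x$ in the support of $X$, $\Pr(L_i=1\mid X=x)=b$, and that $\Pr(L_i=1\mid T=t,X=x)\le c$ for all $i$ and all $(t,x)$ with $\Pr(T=t,X=x)>0$. Then \[ I(X;T)\le \frac{-b\log(1-c)+c\log(1-b)}{c}\,n. \]
   Context: All logarithms are base $2$. Collaborating cryptogenography protocol: there are $n$ players $\mathrm{plr}_1,\dots,\mathrm{plr}_n$; a secret $X$ (finitely supported) and indicators $L_1,\dots,L_n\in\{0,1\}$ ($L_i=1$ means $\mathrm{plr}_i$ knows $X$) have a joint distribution. A protocol $\pi$ specifies, for every possible partial transcript $t^k=(t_1,\dots,t_k)$ (the tuple of the first $k$ messages): whether communication stops; if not, which player $\mathrm{plr}_i$ sends the next message; and probability distributions $p_?$ and $(p_x)_{x}$ on a finite message set (depending on $t^k$). $\mathrm{plr}_i$ draws the next message, with fresh independent randomness, from $p_?$ if $L_i=0$ and from $p_x$ if $L_i=1$ and $X=x$. There is a number $\mathrm{length}(\pi)$ such that the protocol always stops after at most that many messages. $T$ denotes the random full transcript. *)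

From HB Require Import structures.
From mathcomp Require Import all_boot.
From Stdlib Require Import Reals.

Set Implicit Arguments.
Unset Strict Implicit.
Unset Printing Implicit Defensive.

Local Open Scope R_scope.

Definition log2R (x : R) : R := ln x / ln 2.

Definition rsum {T : finType} (F : T -> R) : R := \big[Rplus/R0]_(x : T) F x.

Definition is_dist {T : finType} (p : T -> R) : Prop :=
  (forall m, 0 <= p m) /\ rsum p = 1.

(* For every partial transcript t (a list of
   messages): whether communication stops, who speaks next, the message
   distribution p_? (p_unk) used by a speaker not knowing X, and the
   distributions p_x (p_kn t x) used by a speaker knowing X = x. *)
Record protocol (n : nat) (X M : finType) := Protocol {
  stops : seq M -> bool;
  speaker : seq M -> 'I_n;
  p_unk : seq M -> M -> R;
  p_kn : seq M -> X -> M -> R }.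

Definition valid_protocol n (X M : finType) (pi : protocol n X M) (len : nat) : Prop :=
  (forall t : seq M, leq len (size t) -> stops pi t) /\
  (forall t : seq M, ~~ stops pi t ->
     is_dist (p_unk pi t) /\ forall x, is_dist (p_kn pi t x)).

Section Transcripts.
Variables (n : nat) (X M : finType) (pi : protocol n X M).

Definition msg_prob (x : X) (l : {ffun 'I_n -> bool}) (t : seq M) (m : M) : R :=
  if l (speaker pi t) then p_kn pi t x m else p_unk pi t m.

Fixpoint tp_aux (x : X) (l : {ffun 'I_n -> bool}) (pre rest : seq M) : R :=
  match rest with
  | [::] => if stops pi pre then 1 else 0
  | m :: r => if stops pi pre then 0
              else msg_prob x l pre m * tp_aux x l (rcons pre m) r
  end.

(* Pr(T = t | X = x, L = l) *)
Definition trans_prob (x : X) (l : {ffun 'I_n -> bool}) (t : seq M) : R :=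
  tp_aux x l [::] t.

Variable P : X -> {ffun 'I_n -> bool} -> R.  (* joint law of (X, L_1..L_n) *)

Definition pX (x : X) : R := rsum (fun l : {ffun 'I_n -> bool} => P x l).
Definition pXL (i : 'I_n) (x : X) : R :=
  rsum (fun l : {ffun 'I_n -> bool} => if l i then P x l else 0).
Definition pXT (x : X) (t : seq M) : R :=
  rsum (fun l : {ffun 'I_n -> bool} => P x l * trans_prob x l t).
Definition pLXT (i : 'I_n) (x : X) (t : seq M) : R :=
  rsum (fun l : {ffun 'I_n -> bool} => if l i then P x l * trans_prob x l t else 0).
Definition pT (t : seq M) : R := rsum (fun x : X => pXT x t).

Definition tsum (len : nat) (F : seq M -> R) : R :=
  \big[Rplus/R0]_(k < len.+1) \big[Rplus/R0]_(t : k.-tuple M) F (val t).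

(* mutual information I(X;T) (base 2); all transcripts have length <= len *)
Definition mutual_info (len : nat) : R :=
  tsum len (fun t => rsum (fun x : X =>
    if Rlt_dec 0 (pXT x t)
    then pXT x t * log2R (pXT x t / (pX x * pT t)) else 0)).

End Transcripts.

From HB Require Import structures.
From mathcomp Require Import all_boot.
From Stdlib Require Import Reals Lra FunctionalExtensionality.
Local Open Scope R_scope.

(* The argument follows the protocol tree.  A weight is a function of the
   secret x and the knowledge vector l; at the node reached by a partial
   transcript it is Pr(X = x, L = l, transcript so far).  Its potential is
   the entropy term sum_x w(x) ln(w(x) / w) plus, for every player i, the
   term sum_x w(x) ln Pr(L_i = 0 | x, node).
   1. One message never increases the potential (potential_extend): for the
      speaker, ignorant players draw the message from the fixed law p_?, so
      the change is a Gibbs divergence; for the other players it is the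
      log-sum inequality.  Induction over the tree gives potential_leaves_le.
   2. At the root, Pr(L_i = 1 | X = x) = b makes the potential
      -H(X) + n ln(1-b) (potential_uniform).
   3. At a leaf, Pr(L_i = 1 | T, X) <= c and the concavity of ln bound the
      potential below by -H(X | T = t) + ln(1-c)/c times the knowing mass
      (potential_lower_bound); knowing mass is conserved and totals n b.
   4. I(X;T) ln 2 = H(X) - H(X|T) (mutual_info_ln2); the theorem follows. *)

Set Implicit Arguments.
Unset Strict Implicit.
Unset Printing Implicit Defensive.

HB.instance Definition _ := Monoid.isComLaw.Build R R0 Rplus
  (fun a b c => esym (Rplus_assoc a b c)) Rplus_comm Rplus_0_l.
HB.instance Definition _ := Monoid.isMulLaw.Build R R0 Rmult Rmult_0_l Rmult_0_r.
HB.instance Definition _ := Monoid.isAddLaw.Build R Rmult Rplus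
  Rmult_plus_distr_r Rmult_plus_distr_l.

Lemma sumR_le (I : finType) (A : pred I) (F G : I -> R) :
  (forall i, A i -> F i <= G i) ->
  \big[Rplus/R0]_(i | A i) F i <= \big[Rplus/R0]_(i | A i) G i.
Proof. by move=> FG; apply: (big_ind2 (fun x y => x <= y)) => // *; lra. Qed.

Lemma sumR_ge0 (I : finType) (F : I -> R) :
  (forall i, 0 <= F i) -> 0 <= \big[Rplus/R0]_i F i.
Proof. by move=> F0; apply: (big_ind (fun x => 0 <= x)) => // *; lra. Qed.

Lemma sumR_term_le (I : finType) (F : I -> R) j :
  (forall i, 0 <= F i) -> F j <= \big[Rplus/R0]_i F i.
Proof.
move=> F0; rewrite (bigD1 j) //=.
suff : 0 <= \big[Rplus/R0]_(i | i != j) F i by lra.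
by apply: (big_ind (fun x => 0 <= x)) => // *; lra.
Qed.

Lemma sumR_pos_term (I : finType) (F : I -> R) :
  0 < \big[Rplus/R0]_i F i -> exists i, 0 < F i.
Proof.
move=> Fpos; case: (pickP (fun i => Rlt_dec 0 (F i))) => [i | Fle].
  by case: Rlt_dec => // ? _; exists i.
suff : \big[Rplus/R0]_i F i <= \big[Rplus/R0]_(i : I) 0 by rewrite [X in _ <= X]big1 //; lra.
by apply: sumR_le => i _; move: (Fle i); case: Rlt_dec => // Fi _; exact: Rnot_lt_le.
Qed.

Lemma sumR_sub (I : finType) (F G : I -> R) :
  \big[Rplus/R0]_i (F i - G i) = \big[Rplus/R0]_i F i - \big[Rplus/R0]_i G i.
Proof. by rewrite /Rminus big_split /= (big_morph Ropp Ropp_plus_distr Ropp_0). Qed.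

Lemma sumR_const (n : nat) (a : R) : \big[Rplus/R0]_(i < n) a = INR n * a.
Proof.
elim: n => [|n IH]; first by rewrite big_ord0 /=; lra.
by rewrite big_ord_recr IH S_INR /=; lra.
Qed.

Lemma sum_tuple_cons (M : finType) k (F : seq M -> R) :
  \big[Rplus/R0]_(t : k.+1.-tuple M) F (val t) =
  \big[Rplus/R0]_(m : M) \big[Rplus/R0]_(t : k.-tuple M) F (m :: val t).
Proof.
rewrite pair_big /=.
rewrite (reindex (fun p : M * k.-tuple M => [tuple of p.1 :: p.2])) //=.
exists (fun t : k.+1.-tuple M => (thead t, [tuple of behead t])).
  by move=> [m t] _ /=; congr pair; apply: val_inj.
by move=> t _; apply: val_inj => /=; rewrite [in RHS](tuple_eta t).
Qed.

Section TranscriptSums.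
Variable M : finType.
Implicit Types (d : nat) (F G : seq M -> R).

Lemma tsum0 F : tsum 0 F = F [::].
Proof.
rewrite /tsum big_ord_recl big_ord0 Rplus_0_r /=.
by rewrite (big_pred1 [tuple]) //= => t; apply/esym/eqP; exact: tuple0.
Qed.

Lemma tsumS d F :
  tsum d.+1 F = F [::] + \big[Rplus/R0]_(m : M) tsum d (fun r => F (m :: r)).
Proof.
rewrite /tsum big_ord_recl; congr Rplus.
  by rewrite (big_pred1 [tuple]) //= => t; apply/esym/eqP; exact: tuple0.
by rewrite exchange_big; apply: eq_bigr => i _; exact: sum_tuple_cons.
Qed.

Lemma tsum_ext d F G : (forall r, F r = G r) -> tsum d F = tsum d G.
Proof. by move=> FG; apply: eq_bigr => k _; apply: eq_bigr. Qed.

Lemma tsum_le d F G : (forall r, F r <= G r) -> tsum d F <= tsum d G.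
Proof. by move=> FG; apply: sumR_le => k _; apply: sumR_le. Qed.

Lemma tsum_scal d F a : tsum d (fun r => a * F r) = a * tsum d F.
Proof. by rewrite /tsum big_distrr; apply: eq_bigr => k _; rewrite big_distrr. Qed.

Lemma tsum_split d F G : tsum d (fun r => F r + G r) = tsum d F + tsum d G.
Proof. by rewrite /tsum -big_split; apply: eq_bigr => k _; rewrite big_split. Qed.

Lemma tsum_sub d F G : tsum d (fun r => F r - G r) = tsum d F - tsum d G.
Proof.
rewrite /Rminus tsum_split; congr Rplus.
rewrite -(Rmult_1_l (tsum d G)) Ropp_mult_distr_l -tsum_scal.
by apply: tsum_ext => r; ring.
Qed.

Lemma tsum_exchange (I : finType) d (F : I -> seq M -> R) :
  tsum d (fun r => \big[Rplus/R0]_(i : I) F i r) =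
  \big[Rplus/R0]_(i : I) tsum d (F i).
Proof. by rewrite /tsum exchange_big; apply: eq_bigr => k _; rewrite exchange_big. Qed.

Lemma tsum_nil d F : (forall m r, F (m :: r) = 0) -> tsum d F = F [::].
Proof.
move=> F0; case: d => [|d]; first exact: tsum0.
rewrite tsumS big1 ?Rplus_0_r // => m _.
by rewrite /tsum big1 // => k _; rewrite big1.
Qed.

End TranscriptSums.

Lemma ln_le_sub1 y : 0 < y -> ln y <= y - 1.
Proof. by move=> y0; have := exp_ineq1_le (ln y); rewrite exp_ln //; lra. Qed.

(* One term of the log-sum inequality, with A, B the total masses:
   a ln(b/a) <= a ln(B/A) + (A/B) b - a, by the tangent bound at bA/(aB). *)
Lemma log_sum_term a b A B :
  0 <= a -> 0 <= b -> (0 < a -> 0 < b) -> 0 < A -> 0 < B ->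
  a * ln (b / a) <= a * ln (B / A) + (A / B * b - a).
Proof.
move=> a0 b0 ab A0 B0; case: (Req_dec a 0) => [-> | an0].
  have : 0 <= A / B * b by apply: Rmult_le_pos => //; apply: Rlt_le; apply: Rdiv_lt_0_compat.
  lra.
have apos : 0 < a by lra.
have bpos := ab apos.
have ratio_pos : 0 < b * A / (a * B) by apply: Rdiv_lt_0_compat; nra.
have -> : b / a = B / A * (b * A / (a * B)) by field; lra.
rewrite ln_mult //; last exact: Rdiv_lt_0_compat.
have := ln_le_sub1 ratio_pos.
have -> : A / B * b - a = a * (b * A / (a * B) - 1) by field; lra.
nra.
Qed.

Lemma log_sum_inequality (I : finType) (a b : I -> R) :
  (forall i, 0 <= a i) -> (forall i, 0 <= b i) -> (forall i, 0 < a i -> 0 < b i) ->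
  \big[Rplus/R0]_i (a i * ln (b i / a i)) <=
  (\big[Rplus/R0]_i a i) * ln ((\big[Rplus/R0]_i b i) / (\big[Rplus/R0]_i a i)).
Proof.
move=> a0 b0 ab.
have [Apos | A0] := Rle_lt_or_eq _ _ (sumR_ge0 a0); last first.
  have ai0 i : a i = 0 by have := sumR_term_le i a0; have := a0 i; lra.
  rewrite -A0 Rmult_0_l big1 => [|i _]; [exact: Rle_refl | by rewrite ai0 Rmult_0_l].
set A := \big[Rplus/R0]_i a i; set B := \big[Rplus/R0]_i b i.
have [i ai] := sumR_pos_term Apos.
have Bpos : 0 < B by apply: Rlt_le_trans (ab _ ai) (sumR_term_le _ b0).
apply: Rle_trans (sumR_le (fun i _ => log_sum_term (a0 i) (b0 i) (@ab i) Apos Bpos)) _.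
rewrite big_split /= -big_distrl /= -/A.
have -> : \big[Rplus/R0]_i (A / B * b i - a i) = A / B * B - A.
  by rewrite /Rminus big_split /= -big_distrr (big_morph Ropp Ropp_plus_distr Ropp_0).
right; field; lra.
Qed.

Lemma gibbs_inequality (I : finType) (a b : I -> R) :
  (forall i, 0 <= a i) -> (forall i, 0 <= b i) -> (forall i, 0 < a i -> 0 < b i) ->
  \big[Rplus/R0]_i b i = \big[Rplus/R0]_i a i ->
  \big[Rplus/R0]_i (a i * ln (b i / a i)) <= 0.
Proof.
move=> a0 b0 ab sumE; apply: Rle_trans (log_sum_inequality a0 b0 ab) _.
rewrite sumE; have [-> | Anz] := Req_dec (\big[Rplus/R0]_i a i) 0; first lra.
by rewrite /Rdiv Rinv_r // ln_1 Rmult_0_r; lra.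
Qed.

Lemma ln_above_chord c u :
  0 < c < 1 -> 1 - c <= u <= 1 -> (1 - u) / c * ln (1 - c) <= ln u.
Proof.
move=> c01 u_range; have upos : 0 < u by lra.
set th := (1 - u) / c.
have thc : th * c = 1 - u by rewrite /th; field; lra.
have th01 : 0 <= th <= 1 by split; nra.
(* u = (1 - th) * 1 + th * (1 - c); combine the tangent bounds at 1/u
   and (1 - c)/u with weights 1 - th and th *)
have inv_pos : 0 < / u by apply: Rinv_0_lt_compat.
have tangent_inv : - ln u <= / u - 1 by rewrite -ln_Rinv //; exact: ln_le_sub1.
have cu_pos : 0 < (1 - c) / u by apply: Rdiv_lt_0_compat; lra.
have tangent_c : ln (1 - c) - ln u <= (1 - c) / u - 1.
  by have := ln_le_sub1 cu_pos; rewrite [in ln _]/Rdiv ln_mult ?ln_Rinv //; lra.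
have comb : (1 - th) * (/ u - 1) + th * ((1 - c) / u - 1) = 0.
  by rewrite /th; field; lra.
nra.
Qed.

(* The
   joint law of (X, L) is a weight, and so is that law multiplied by the
   probability of producing a given (partial) transcript. *)
Definition weight (n : nat) (X : finType) := X -> {ffun 'I_n -> bool} -> R.

Section Potential.
Variables (n : nat) (X : finType).
Implicit Types (a : weight n X) (x : X) (i k : 'I_n) (c : R).

Definition nonneg_weight a : Prop := forall x l, 0 <= a x l.

Definition mass a x : R := rsum (fun l => a x l).

Definition ignorant i a : weight n X :=
  fun x (l : {ffun 'I_n -> bool}) => if l i then 0 else a x l.

Definition total a : R := rsum (fun x => mass a x).

Definition bounded_knowledge c a : Prop :=
  forall x i, (1 - c) * mass a x <= mass (ignorant i a) x.

Definition potential a : R :=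
  rsum (fun x => mass a x * ln (mass a x / total a) +
    \big[Rplus/R0]_(i < n) (mass a x * ln (mass (ignorant i a) x / mass a x))).

Lemma mass_ge0 a x : nonneg_weight a -> 0 <= mass a x.
Proof. by move=> a0; apply: sumR_ge0. Qed.

Lemma ignorant_nonneg i a : nonneg_weight a -> nonneg_weight (ignorant i a).
Proof. by move=> a0 x l; rewrite /ignorant; case: (l i) => //; apply: Rle_refl. Qed.

Lemma mass_ignorant_split i a x :
  mass a x = mass (ignorant i a) x +
             rsum (fun l : {ffun 'I_n -> bool} => if l i then a x l else 0).
Proof.
rewrite /mass /rsum -big_split; apply: eq_bigr => l _.
by rewrite /ignorant /=; case: (l i); lra.
Qed.

Lemma mass_ignorant_le i a x : nonneg_weight a -> mass (ignorant i a) x <= mass a x.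
Proof.
move=> a0; rewrite (mass_ignorant_split i a x).
suff : 0 <= rsum (fun l : {ffun 'I_n -> bool} => if l i then a x l else 0) by lra.
by apply: sumR_ge0 => l; case: (l i) => //; apply: Rle_refl.
Qed.

Lemma mass_le_total a x : nonneg_weight a -> mass a x <= total a.
Proof. by move=> a0; apply: (sumR_term_le x (F := mass a)) => y; apply: mass_ge0. Qed.

Lemma bounded_ignorant_pos c a x i :
  c < 1 -> bounded_knowledge c a -> 0 < mass a x -> 0 < mass (ignorant i a) x.
Proof.
move=> c1 bnd ax; apply: Rlt_le_trans (bnd x i).
by apply: Rmult_lt_0_compat; lra.
Qed.

Lemma potential_zero a : (forall x l, a x l = 0) -> potential a = 0.
Proof.
move=> a0; have mass0 x : mass a x = 0 by apply: big1 => l _.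
rewrite /potential /rsum big1 // => x _; rewrite mass0 Rmult_0_l Rplus_0_l.
by apply: big1 => i _; rewrite Rmult_0_l.
Qed.

Definition merged_term k a : R :=
  rsum (fun x => mass a x * ln (mass (ignorant k a) x / total a)).

Definition others_term k a : R :=
  rsum (fun x => \big[Rplus/R0]_(i < n | i != k)
    (mass a x * ln (mass (ignorant i a) x / mass a x))).

Lemma potential_split c a k :
  c < 1 -> nonneg_weight a -> bounded_knowledge c a ->
  potential a = merged_term k a + others_term k a.
Proof.
move=> c1 a0 bnd; rewrite /potential /merged_term /others_term /rsum -big_split.
apply: eq_bigr => x _; rewrite (bigD1 k) //= -Rplus_assoc; congr Rplus.
have [ax | ax0] := Rle_lt_or_eq _ _ (mass_ge0 x a0); last by rewrite -ax0; lra.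
have ign_pos := bounded_ignorant_pos k c1 bnd ax.
have tot_pos : 0 < total a by apply: Rlt_le_trans ax (mass_le_total x a0).
rewrite -Rmult_plus_distr_l -ln_mult; try exact: Rdiv_lt_0_compat.
by congr (_ * ln _); field; lra.
Qed.

(* Lower bound at a leaf: by concavity of ln, each ignorance term is at
   least ln(1-c)/c times the knowing mass. *)
Lemma potential_lower_bound c a :
  0 < c < 1 -> nonneg_weight a -> bounded_knowledge c a ->
  rsum (fun x => mass a x * ln (mass a x / total a)) +
  ln (1 - c) / c * rsum (fun x => \big[Rplus/R0]_(i < n)
                                   (mass a x - mass (ignorant i a) x))
  <= potential a.
Proof.
move=> c01 a0 bnd; rewrite /potential /rsum big_split /=.
apply: Rplus_le_compat_l; rewrite big_distrr /=; apply: sumR_le => x _.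
rewrite big_distrr /=; apply: sumR_le => i _.
have [ax | ax0] := Rle_lt_or_eq _ _ (mass_ge0 x a0); last first.
  have ign0 : mass (ignorant i a) x = 0.
    apply: Rle_antisym; last exact: mass_ge0 (ignorant_nonneg i a0).
    by rewrite ax0; exact: mass_ignorant_le.
  by rewrite -ax0 ign0; right; ring.
set u := mass (ignorant i a) x / mass a x.
have uW : u * mass a x = mass (ignorant i a) x by rewrite /u; field; lra.
have u_range : 1 - c <= u <= 1.
  by have := bnd x i; have := mass_ignorant_le i x a0; split; nra.
have -> : mass a x - mass (ignorant i a) x = (1 - u) * mass a x by rewrite /u; field; lra.
have := ln_above_chord c01 u_range.
have -> : ln (1 - c) / c * ((1 - u) * mass a x) = mass a x * ((1 - u) / c * ln (1 - c)).
  by field; lra.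
by move=> chord; apply: Rmult_le_compat_l; lra.
Qed.

Lemma potential_uniform b a :
  b < 1 -> nonneg_weight a ->
  (forall x i, mass (ignorant i a) x = (1 - b) * mass a x) ->
  potential a = rsum (fun x => mass a x * ln (mass a x / total a))
                + INR n * ln (1 - b) * total a.
Proof.
move=> b1 a0 unif; rewrite /potential /total /rsum big_split /= big_distrr /=.
congr Rplus; apply: eq_bigr => x _.
have [ax | ax0] := Rle_lt_or_eq _ _ (mass_ge0 x a0); last first.
  by rewrite -ax0 Rmult_0_r big1 // => i _; rewrite Rmult_0_l.
under eq_bigr => i _ do rewrite unif.
rewrite sumR_const; have -> : (1 - b) * mass a x / mass a x = 1 - b by field; lra.
ring.
Qed.

Lemma knowing_mass_uniform b a :
  (forall x i, mass (ignorant i a) x = (1 - b) * mass a x) ->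
  rsum (fun x => \big[Rplus/R0]_(i < n) (mass a x - mass (ignorant i a) x))
  = INR n * b * total a.
Proof.
move=> unif; rewrite /total /rsum big_distrr /=; apply: eq_bigr => x _.
under eq_bigr => i _ do rewrite unif.
by rewrite sumR_const; ring.
Qed.

End Potential.

Section ProtocolTree.
Variables (n : nat) (X M : finType) (pi : protocol n X M) (len : nat).
Hypothesis pi_valid : valid_protocol pi len.
Implicit Types (a : weight n X) (x : X) (l : {ffun 'I_n -> bool}) (i : 'I_n)
  (d : nat) (pre r : seq M) (m : M) (c : R).

Lemma msg_prob_ge0 x l pre m : ~~ stops pi pre -> 0 <= msg_prob pi x l pre m.
Proof.
move=> run; have [[unk_ge0 _] kn] := proj2 pi_valid pre run.
by rewrite /msg_prob; case: (l _); [case: (kn x) | ].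
Qed.

Lemma msg_prob_sum1 x l pre :
  ~~ stops pi pre -> \big[Rplus/R0]_(m : M) msg_prob pi x l pre m = 1.
Proof.
move=> run; have [[_ unk_sum1] kn] := proj2 pi_valid pre run.
by rewrite /msg_prob; case: (l _); [case: (kn x) | ].
Qed.

Lemma tp_aux_ge0 x l pre r : 0 <= tp_aux pi x l pre r.
Proof.
elim: r pre => [|m r IH] pre /=; first by case: (stops _ _); lra.
case run: (stops _ _); first exact: Rle_refl.
by apply: Rmult_le_pos; [apply: msg_prob_ge0; rewrite run | exact: IH].
Qed.

Lemma tp_aux_total x l d pre :
  (len <= d + size pre)%nat -> tsum d (tp_aux pi x l pre) = 1.
Proof.
elim: d pre => [|d IH] pre d_large.
  by rewrite tsum0 /= (proj1 pi_valid).
case run: (stops pi pre).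
  by rewrite tsum_nil /= run // => m r /=; rewrite run.
rewrite tsumS /= run Rplus_0_l -(msg_prob_sum1 x l (negbT run)).
apply: eq_bigr => m _.
by rewrite tsum_scal IH ?Rmult_1_r // size_rcons addnS.
Qed.

Definition extend a pre m : weight n X :=
  fun x l => a x l * msg_prob pi x l pre m.

Definition continue a pre r : weight n X :=
  fun x l => a x l * tp_aux pi x l pre r.

Lemma extend_nonneg a pre m :
  ~~ stops pi pre -> nonneg_weight a -> nonneg_weight (extend a pre m).
Proof. by move=> run a0 x l; apply: Rmult_le_pos => //; exact: msg_prob_ge0. Qed.

Lemma continue_nonneg a pre r : nonneg_weight a -> nonneg_weight (continue a pre r).
Proof. by move=> a0 x l; apply: Rmult_le_pos => //; exact: tp_aux_ge0. Qed.

Lemma continue_cons a pre m r :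
  ~~ stops pi pre -> continue a pre (m :: r) = continue (extend a pre m) (rcons pre m) r.
Proof.
move=> run; apply: functional_extensionality => x; apply: functional_extensionality => l.
by rewrite /continue /extend /= (negbTE run) Rmult_assoc.
Qed.

Lemma ignorant_continue i a pre r :
  ignorant i (continue a pre r) = continue (ignorant i a) pre r.
Proof.
apply: functional_extensionality => x; apply: functional_extensionality => l.
by rewrite /ignorant /continue; case: (l i); rewrite ?Rmult_0_l.
Qed.

Lemma ignorant_extend i a pre m :
  ignorant i (extend a pre m) = extend (ignorant i a) pre m.
Proof.
apply: functional_extensionality => x; apply: functional_extensionality => l.
by rewrite /ignorant /extend; case: (l i); rewrite ?Rmult_0_l.
Qed.

Lemma mass_extend_sum a pre x :
  ~~ stops pi pre -> \big[Rplus/R0]_(m : M) mass (extend a pre m) x = mass a x.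
Proof.
move=> run; rewrite /mass /rsum exchange_big; apply: eq_bigr => l _.
by rewrite /extend -big_distrr /= msg_prob_sum1 ?Rmult_1_r.
Qed.

Lemma total_extend_sum a pre :
  ~~ stops pi pre -> \big[Rplus/R0]_(m : M) total (extend a pre m) = total a.
Proof.
by move=> run; rewrite /total /rsum exchange_big; apply: eq_bigr => x _; exact: mass_extend_sum.
Qed.

Lemma mass_continue_total a d pre x :
  (len <= d + size pre)%nat -> tsum d (fun r => mass (continue a pre r) x) = mass a x.
Proof.
move=> d_large; rewrite /mass /rsum tsum_exchange; apply: eq_bigr => l _.
by rewrite tsum_scal tp_aux_total ?Rmult_1_r.
Qed.

Lemma knowing_mass_continue_total a d pre :
  (len <= d + size pre)%nat ->
  tsum d (fun r => rsum (fun x => \big[Rplus/R0]_(i < n)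
    (mass (continue a pre r) x - mass (ignorant i (continue a pre r)) x)))
  = rsum (fun x => \big[Rplus/R0]_(i < n) (mass a x - mass (ignorant i a) x)).
Proof.
move=> d_large; rewrite /rsum tsum_exchange; apply: eq_bigr => x _.
rewrite tsum_exchange; apply: eq_bigr => i _.
under tsum_ext => r do rewrite ignorant_continue.
by rewrite tsum_sub !mass_continue_total.
Qed.

(* Only the speaker's knowledge affects the next message, and a speaker
   ignorant of the secret sends m with the fixed probability p_?(m). *)
Lemma mass_ignorant_speaker_extend a pre m x :
  mass (ignorant (speaker pi pre) (extend a pre m)) x =
  mass (ignorant (speaker pi pre) a) x * p_unk pi pre m.
Proof.
rewrite /mass /rsum big_distrl /=; apply: eq_bigr => l _.
by rewrite /ignorant /extend /msg_prob; case: (l _); rewrite ?Rmult_0_l.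
Qed.

Lemma bounded_of_continuations c a d pre :
  (len <= d + size pre)%nat ->
  (forall r, bounded_knowledge c (continue a pre r)) -> bounded_knowledge c a.
Proof.
move=> d_large bnd x i.
rewrite -(mass_continue_total a x d_large) -(mass_continue_total (ignorant i a) x d_large).
rewrite -tsum_scal; apply: tsum_le => r; rewrite -ignorant_continue; exact: bnd.
Qed.

End ProtocolTree.

Section NodeInequality.
Variables (n : nat) (X M : finType) (pi : protocol n X M) (len : nat).
Hypothesis pi_valid : valid_protocol pi len.
Variables (c : R) (a : weight n X) (pre : seq M).
Hypotheses (c1 : c < 1) (run : ~~ stops pi pre) (a0 : nonneg_weight a).
Hypothesis bounded_extend : forall m, bounded_knowledge c (extend pi a pre m).

Local Notation k := (speaker pi pre).

Let extension_nonneg m : nonneg_weight (extend pi a pre m) :=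
  extend_nonneg pi_valid m run a0.

Let p_unk_ge0 m : 0 <= p_unk pi pre m.
Proof. by have [[unk_ge0 _] _] := proj2 pi_valid pre run. Qed.

Lemma extend_support m x :
  0 < mass (extend pi a pre m) x ->
  0 < p_unk pi pre m /\ 0 < mass (ignorant k a) x.
Proof.
move=> ext_pos; have := bounded_ignorant_pos k c1 (bounded_extend m) ext_pos.
rewrite mass_ignorant_speaker_extend => prod_pos.
have := p_unk_ge0 m; have := mass_ge0 x (ignorant_nonneg k a0).
by split; nra.
Qed.

(* The merged term of the speaker does not increase: its change is a
   Gibbs divergence between the next-message law and p_?. *)
Lemma merged_term_extend :
  \big[Rplus/R0]_(m : M) merged_term k (extend pi a pre m) <= merged_term k a.
Proof.
pose W m x := mass (extend pi a pre m) x.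
pose T m := total (extend pi a pre m).
have W0 m x : 0 <= W m x by apply: mass_ge0; exact: extension_nonneg.
have T0 m : 0 <= T m by apply: sumR_ge0 => x; exact: W0.
have T_sum : \big[Rplus/R0]_m T m = total a
  by exact: (total_extend_sum pi_valid a run).
have T_pos m x : 0 < W m x -> 0 < T m /\ 0 < total a.
  move=> Wpos; have Tpos : 0 < T m.
    by apply: Rlt_le_trans Wpos (mass_le_total x (extension_nonneg m)).
  by split => //; rewrite -T_sum; apply: Rlt_le_trans Tpos (sumR_term_le m T0).
(* split each log-ratio through the speaker-ignorant mass of the parent *)
have term_split m x :
    W m x * ln (mass (ignorant k (extend pi a pre m)) x / T m) =
    W m x * ln (mass (ignorant k a) x / total a) +
    W m x * ln (p_unk pi pre m * total a / T m).
  have [Wpos | Wzero] := Rle_lt_or_eq _ _ (W0 m x); last by rewrite -Wzero; ring.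
  have [pu_pos ign_pos] := extend_support Wpos.
  have [Tpos tot_pos] := T_pos m x Wpos.
  rewrite mass_ignorant_speaker_extend -Rmult_plus_distr_l -ln_mult.
  - by congr (_ * ln _); field; lra.
  - exact: Rdiv_lt_0_compat.
  - by apply: Rdiv_lt_0_compat => //; apply: Rmult_lt_0_compat.
rewrite /merged_term /rsum.
under eq_bigr => m _ do (under eq_bigr => x _ do rewrite term_split).
under eq_bigr => m _ do rewrite big_split /=.
rewrite big_split /= [X in X + _]exchange_big /=.
have -> : \big[Rplus/R0]_x \big[Rplus/R0]_m
            (W m x * ln (mass (ignorant k a) x / total a)) =
          \big[Rplus/R0]_x (mass a x * ln (mass (ignorant k a) x / total a)).
  by apply: eq_bigr => x _; rewrite -big_distrl /= (mass_extend_sum pi_valid).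
have -> : \big[Rplus/R0]_m \big[Rplus/R0]_x
            (W m x * ln (p_unk pi pre m * total a / T m)) =
          \big[Rplus/R0]_m (T m * ln (p_unk pi pre m * total a / T m)).
  by apply: eq_bigr => m _; rewrite -big_distrl.
suff : \big[Rplus/R0]_m (T m * ln (p_unk pi pre m * total a / T m)) <= 0 by lra.
apply: gibbs_inequality => // [m | m Tpos |].
- by apply: Rmult_le_pos => //; rewrite -T_sum; apply: sumR_ge0.
- have [x Wpos] := sumR_pos_term Tpos.
  have [pu_pos _] := extend_support Wpos; have [_ tot_pos] := T_pos m x Wpos.
  exact: Rmult_lt_0_compat.
- have [[_ unk_sum1] _] := proj2 pi_valid pre run.
  by rewrite -big_distrl /= -/(rsum _) unk_sum1 Rmult_1_l.
Qed.

(* The ignorance terms of the other players do not increase, by the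
   log-sum inequality over the next message. *)
Lemma others_term_extend :
  \big[Rplus/R0]_(m : M) others_term k (extend pi a pre m) <= others_term k a.
Proof.
rewrite /others_term /rsum exchange_big /=; apply: sumR_le => x _.
rewrite exchange_big /=; apply: sumR_le => i _.
apply: Rle_trans (log_sum_inequality _ _ _) _.
- by move=> m; apply: mass_ge0; exact: extension_nonneg.
- by move=> m; apply: mass_ge0; apply: ignorant_nonneg; exact: extension_nonneg.
- by move=> m; exact: bounded_ignorant_pos i c1 (bounded_extend m).
rewrite (mass_extend_sum pi_valid) //.
under eq_bigr => m _ do rewrite ignorant_extend.
by rewrite (mass_extend_sum pi_valid) //; apply: Rle_refl.
Qed.

Lemma potential_extend :
  bounded_knowledge c a ->
  \big[Rplus/R0]_(m : M) potential (extend pi a pre m) <= potential a.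
Proof.
move=> bnd; rewrite (potential_split k c1 a0 bnd).
under eq_bigr => m _ do
  rewrite (potential_split k c1 (extension_nonneg m) (bounded_extend m)).
rewrite big_split /=; apply: Rplus_le_compat.
- exact: merged_term_extend.
- exact: others_term_extend.
Qed.

End NodeInequality.

Section Tree.
Variables (n : nat) (X M : finType) (pi : protocol n X M) (len : nat).
Hypothesis pi_valid : valid_protocol pi len.
Variable c : R.
Hypothesis c1 : c < 1.
Implicit Types (a : weight n X) (d : nat) (pre r : seq M) (m : M).

Lemma potential_stopped a d pre :
  stops pi pre -> tsum d (fun r => potential (continue pi a pre r)) = potential a.
Proof.
move=> stop; rewrite tsum_nil => [|m r].
  congr potential; apply: functional_extensionality => x.
  by apply: functional_extensionality => l; rewrite /continue /= stop Rmult_1_r.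
by apply: potential_zero => x l; rewrite /continue /= stop Rmult_0_r.
Qed.

Lemma potential_leaves_le d pre a :
  (len <= d + size pre)%nat -> nonneg_weight a ->
  (forall r, bounded_knowledge c (continue pi a pre r)) ->
  tsum d (fun r => potential (continue pi a pre r)) <= potential a.
Proof.
elim: d pre a => [|d IH] pre a d_large a0 leaves.
  by rewrite potential_stopped ?(proj1 pi_valid) //; apply: Rle_refl.
have [stop | run] := boolP (stops pi pre).
  by rewrite potential_stopped //; apply: Rle_refl.
have child_large m : (len <= d + size (rcons pre m))%nat by rewrite size_rcons addnS.
have child_leaves m r : bounded_knowledge c (continue pi (extend pi a pre m) (rcons pre m) r).
  by rewrite -continue_cons //; exact: leaves.
have bounded_extend m : bounded_knowledge c (extend pi a pre m).
  exact: (bounded_of_continuations pi_valid (child_large m) (child_leaves m)).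
rewrite tsumS potential_zero ?Rplus_0_l => [|x l]; last first.
  by rewrite /continue /= (negbTE run) Rmult_0_r.
apply: Rle_trans (potential_extend pi_valid c1 run a0 bounded_extend
                    (bounded_of_continuations pi_valid d_large leaves)).
apply: sumR_le => m _.
rewrite (@tsum_ext _ d _ (fun r => potential (continue pi (extend pi a pre m) (rcons pre m) r))).
  exact: (IH _ _ (child_large m) (extend_nonneg pi_valid m run a0) (child_leaves m)).
by move=> r; rewrite continue_cons.
Qed.

End Tree.

Section Cryptogenography.
Variables (n : nat) (X M : finType) (P : weight n X) (pi : protocol n X M) (len : nat).
Hypotheses (pi_valid : valid_protocol pi len) (P0 : nonneg_weight P).
Implicit Types (x : X) (i : 'I_n) (t : seq M) (b c : R).

(* The joint law of secret, knowledge and transcript t, as a weight: its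
   masses are Pr(X = x, T = t) and its total is Pr(T = t). *)
Local Notation leaf t := (continue pi P [::] t).

Lemma knowing_mass_root i x : pXL P i x = mass P x - mass (ignorant i P) x.
Proof. by rewrite (mass_ignorant_split i P x) Rplus_minus_l. Qed.

Lemma knowing_mass_leaf i x t :
  pLXT pi P i x t = mass (leaf t) x - mass (ignorant i (leaf t)) x.
Proof. by rewrite (mass_ignorant_split i (leaf t) x) Rplus_minus_l. Qed.

Lemma root_uniform b :
  (forall i x, 0 < pX P x -> pXL P i x / pX P x = b) ->
  forall x i, mass (ignorant i P) x = (1 - b) * mass P x.
Proof.
move=> prior x i; have := knowing_mass_root i x.
have [Ppos | P0x] := Rle_lt_or_eq _ _ (mass_ge0 x P0).
  by have := prior i x Ppos; rewrite /pX -/(mass P x) => <- ->; field; lra.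
have := mass_ge0 x (ignorant_nonneg i P0); have := mass_ignorant_le i x P0.
by rewrite -P0x => ign_le ign_ge _; rewrite Rmult_0_r; lra.
Qed.

Lemma leaves_bounded c :
  (forall i x t, 0 < pXT pi P x t -> pLXT pi P i x t / pXT pi P x t <= c) ->
  forall t, bounded_knowledge c (leaf t).
Proof.
move=> posterior t x i; have leaf0 := continue_nonneg pi_valid [::] t P0.
suff : mass (leaf t) x - mass (ignorant i (leaf t)) x <= c * mass (leaf t) x by lra.
rewrite -knowing_mass_leaf.
have [Tpos | T0] := Rle_lt_or_eq _ _ (mass_ge0 x leaf0).
  have ratio : pLXT pi P i x t / mass (leaf t) x <= c := posterior i x t Tpos.
  have -> : pLXT pi P i x t = pLXT pi P i x t / mass (leaf t) x * mass (leaf t) x.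
    by field; lra.
  by apply: Rmult_le_compat_r; lra.
rewrite knowing_mass_leaf -T0.
by have := mass_ge0 x (ignorant_nonneg i leaf0); lra.
Qed.

Lemma mass_root_pos x t : 0 < mass (leaf t) x -> 0 < mass P x.
Proof.
move=> /sumR_pos_term [l Pl]; apply: Rlt_le_trans (sumR_term_le l (P0 x)).
have := tp_aux_ge0 pi_valid x l [::] t; rewrite /continue in Pl; nra.
Qed.

Lemma mutual_info_ln2 :
  total P = 1 ->
  mutual_info pi P len * ln 2 =
  tsum len (fun t => rsum (fun x => mass (leaf t) x * ln (mass (leaf t) x / total (leaf t))))
  - rsum (fun x => mass P x * ln (mass P x / total P)).
Proof.
move=> P_total; have ln2_pos : 0 < ln 2 by have := ln_lt_2; lra.
have len_large : (len <= len + size (@nil M))%nat by rewrite addn0.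
have -> : rsum (fun x => mass P x * ln (mass P x / total P)) =
          tsum len (fun t => rsum (fun x => mass (leaf t) x * ln (mass P x))).
  rewrite /rsum tsum_exchange; apply: eq_bigr => x _.
  rewrite P_total /Rdiv Rinv_1 Rmult_1_r Rmult_comm.
  rewrite -(mass_continue_total pi_valid P x len_large) -tsum_scal.
  by apply: tsum_ext => t; ring.
rewrite -tsum_sub Rmult_comm -tsum_scal; apply: tsum_ext => t.
rewrite /rsum -sumR_sub big_distrr /=; apply: eq_bigr => x _.
change (pXT pi P x t) with (mass (leaf t) x); change (pX P x) with (mass P x).
change (pT pi P t) with (total (leaf t)).
case: Rlt_dec => [Tpos | Tnpos] /=; last first.
  have -> : mass (leaf t) x = 0.
    by have := mass_ge0 x (continue_nonneg pi_valid [::] t P0); lra.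
  ring.
have Ppos := mass_root_pos Tpos.
have totpos := Rlt_le_trans _ _ _ Tpos (mass_le_total x (continue_nonneg pi_valid [::] t P0)).
have -> : mass (leaf t) x / total (leaf t) =
          mass (leaf t) x / (mass P x * total (leaf t)) * mass P x by field; lra.
rewrite ln_mult /log2R; first by field; lra.
  by apply: Rdiv_lt_0_compat => //; apply: Rmult_lt_0_compat.
exact: Ppos.
Qed.

End Cryptogenography.

Unset Implicit Arguments.

Theorem theorem3p5 (b c : R) (n : nat) (X M : finType)
  (P : X -> {ffun 'I_n -> bool} -> R) (pi : protocol n X M) (len : nat) :
  0 <= b < 1 -> 0 < c < 1 ->
  (forall x l, 0 <= P x l) ->
  rsum (fun x => pX P x) = 1 ->
  valid_protocol pi len ->
  (forall (i : 'I_n) (x : X), 0 < pX P x -> pXL P i x / pX P x = b) ->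
  (forall (i : 'I_n) (x : X) (t : seq M), 0 < pXT pi P x t ->
      pLXT pi P i x t / pXT pi P x t <= c) ->
  mutual_info pi P len <= (- b * log2R (1 - c) + c * log2R (1 - b)) / c * INR n.
Proof.
move=> [b0 b1] c01 P0 P_total pi_valid prior posterior.
have total1 : total P = 1 := P_total.
have len_large : (len <= len + size (@nil M))%nat by rewrite addn0.
have leaves := leaves_bounded pi_valid P0 posterior.
have tree := potential_leaves_le pi_valid (proj2 c01) len_large P0 leaves.
(* at the root it is -H(X) + n ln(1 - b) *)
rewrite (potential_uniform b1 P0 (root_uniform P0 prior)) in tree.
(* at the leaves it is at least -H(X|T) + n b ln(1 - c) / c *)
have leaf_bound := tsum_le len (fun t => potential_lower_bound c01
  (continue_nonneg pi_valid [::] t P0) (leaves t)).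
rewrite tsum_split tsum_scal (knowing_mass_continue_total pi_valid P len_large)
  (knowing_mass_uniform (root_uniform P0 prior)) in leaf_bound.
have info := mutual_info_ln2 pi_valid P0 total1.
rewrite total1 in tree leaf_bound info.
have ln2_pos : 0 < ln 2 by have := ln_lt_2; lra.
apply: (Rmult_le_reg_r (ln 2)) => //.
have -> : (- b * log2R (1 - c) + c * log2R (1 - b)) / c * INR n * ln 2 =
          INR n * ln (1 - b) - ln (1 - c) / c * (INR n * b) by rewrite /log2R; field; lra.
lra.
Qed.
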